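(* Let $d\in\mathbb{N}$ and let $A$ be a $d\times d$ reclusive matrix. Then the partition graph of the reclusive partition $\mathcal{P}_{A}$ can be properly $(d+1)$-colored; i.e., there is a map $c:\mathcal{P}_A\to\{0,1,\dots,d\}$ such that $c(X)\ne c(Y)$ whenever $X\neq Y$ are adjacent members of $\mathcal{P}_A$.
   Context: A $d\times d$ matrix $A=(a_{ij})$ is reclusive if $a_{ij}=0$ for $i>j$, $a_{ii}=1$ for all $i$, and $a_{ij}>a_{ik}>0$ for all $i\le j<k$. Its reclusive partition is $\mathcal{P}_A=\{A\vec{v}+[0,1)^d:\vec{v}\in\mathbb{Z}^d\}$, a partition of $\mathbb{R}^d$. Two members $X,Y$ are adjacent if $\overline{X}\cap\overline{Y}\neq\emptyset$ (closures). The partition graph has vertex set $\mathcal{P}_A$ and an edge between adjacent members. *)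

(* Points of R^d are column vectors 'cV[R]_d
   with the product (matrix) topology of MathComp-Analysis. *)
From mathcomp Require Import all_boot all_order all_algebra.
From mathcomp Require Import all_classical all_reals all_analysis.
Set Implicit Arguments. Unset Strict Implicit. Unset Printing Implicit Defensive.
Import Order.TTheory GRing.Theory Num.Theory numFieldNormedType.Exports.
Local Open Scope ring_scope.
Local Open Scope classical_set_scope.

Definition reclusive (R : realType) (d : nat) (A : 'M[R]_d) : Prop :=
  [/\ (forall i j : 'I_d, (j < i)%N -> A i j = 0),
      (forall i : 'I_d, A i i = 1) &
      (forall i j k : 'I_d, (i <= j)%N -> (j < k)%N -> A i k < A i j /\ 0 < A i k)].

Definition reclusive_tile (R : realType) (d : nat) (A : 'M[R]_d) (v : 'cV[int]_d)
  : set 'cV[R]_d :=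
  [set x | exists u : 'cV[R]_d, (forall i, 0 <= u i ord0 < 1) /\
           x = A *m map_mx (fun z : int => z%:~R) v + u].

Definition reclusive_partition (R : realType) (d : nat) (A : 'M[R]_d)
  : set (set 'cV[R]_d) :=
  [set X | exists v : 'cV[int]_d, X = reclusive_tile A v].

Definition partition_adjacent (R : realType) (d : nat) (X Y : set 'cV[R]_d) : Prop :=
  closure X `&` closure Y !=set0.

From mathcomp Require Import all_boot all_order all_algebra.
From mathcomp Require Import all_classical all_reals all_analysis.
From mathcomp Require Import zify lra.
Import Order.TTheory GRing.Theory Num.Theory numFieldNormedType.Exports.
Set Implicit Arguments. Unset Strict Implicit. Unset Printing Implicit Defensive.
Local Open Scope ring_scope.
Local Open Scope classical_set_scope.

(* Colour the tile A v + [0,1)^d by the weight sum_k (k+1) v_k modulo d+1.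
   If two distinct tiles A v + [0,1)^d and A v' + [0,1)^d touch, then w = v - v'
   is a nonzero integer vector with |(A w)_i| <= 1 for every row i.  Reading the
   rows from the last one upwards, the reclusive inequalities force the nonzero
   entries of w to be +-1 with alternating signs.  An alternating sum of
   increasing indices in [1, d] has absolute value in [1, d], so the weights of
   v and v' differ modulo d+1. *)

Lemma big_ord_geq_recl (T : Type) (idx : T) (op : Monoid.com_law idx) (n : nat)
    (j : 'I_n) (F : 'I_n -> T) :
  \big[op/idx]_(k < n | (j <= k)%N) F k
  = op (F j) (\big[op/idx]_(k < n | (j < k)%N) F k).
Proof.
rewrite (bigD1 j) //=; congr (op _ _); apply: eq_bigl => k.
by rewrite ltn_neqAle andbC eq_sym.
Qed.

Lemma intr_norm_addr_le1 (R : realFieldType) (x : int) (t : R) :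
  `|x%:~R + t| <= 1 -> -1 < t < 1 -> -1 <= x <= 1.
Proof.
rewrite ler_norml => /andP[lo hi] /andP[t_gt t_lt].
have : -2 < x < 2 by rewrite -(ltr_int R) -(ltr_int R) !intrN; apply/andP; split; lra.
lia.
Qed.

Lemma intr_norm_addr_le1_pos (R : realFieldType) (x : int) (t : R) :
  `|x%:~R + t| <= 1 -> 0 < t < 1 -> x = 0 \/ x = -1.
Proof.
move=> xt /andP[t_gt t_lt].
have /andP[x_ge _] := intr_norm_addr_le1 xt (ltac:(apply/andP; split; lra)).
have : x < 1 by rewrite -(ltr_int R); move: xt; rewrite ler_norml => /andP[_ ?]; lra.
lia.
Qed.

Section TailWeights.
Variable d : nat.

Definition tail_zero (w : 'cV[int]_d) (j : nat) : Prop :=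
  forall k : 'I_d, (j <= k)%N -> w k ord0 = 0.

Definition tail_weight (w : 'cV[int]_d) (j : nat) : int :=
  \sum_(k < d | (j <= k)%N) k.+1%:Z * w k ord0.

Lemma tail_weight_recl (w : 'cV[int]_d) (j : 'I_d) :
  tail_weight w j = j.+1%:Z * w j ord0 + tail_weight w j.+1.
Proof. exact: big_ord_geq_recl. Qed.

Lemma tail_weightB (v v' : 'cV[int]_d) (j : nat) :
  tail_weight (v - v') j = tail_weight v j - tail_weight v' j.
Proof. by rewrite /tail_weight -sumrB; apply: eq_bigr => k _; rewrite !mxE mulrBr. Qed.

Lemma tail_weightN (w : 'cV[int]_d) (j : nat) : tail_weight (- w) j = - tail_weight w j.
Proof. by rewrite -sub0r tail_weightB /tail_weight big1 ?sub0r // => k _; rewrite mxE mulr0. Qed.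

Lemma tail_weight_zero (w : 'cV[int]_d) (j : nat) : tail_zero w j -> tail_weight w j = 0.
Proof. by move=> w0; apply: big1 => k jk; rewrite w0 ?mulr0. Qed.

Lemma tail_zeroN (w : 'cV[int]_d) (j : nat) : tail_zero w j -> tail_zero (- w) j.
Proof. by move=> w0 k jk; rewrite mxE w0 ?oppr0. Qed.

Lemma tail_zero0 (w : 'cV[int]_d) : tail_zero w 0 -> w = 0.
Proof. by move=> w0; apply/matrixP => k l; rewrite (ord1 l) w0 // mxE. Qed.

Definition weight_color (v : 'cV[int]_d) : 'I_d.+1 :=
  inord `|(tail_weight v 0 %% d.+1%:Z)%Z|.

Lemma weight_color_eq (v v' : 'cV[int]_d) :
  weight_color v = weight_color v' -> (d.+1%:Z %| tail_weight v 0 - tail_weight v' 0)%Z.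
Proof.
have mod_lt x : (`|(x %% d.+1%:Z)%Z| < d.+1)%N by rewrite -ltz_nat gez0_abs ?modz_ge0 ?ltz_pmod.
move/(congr1 val); rewrite /= !inordK // => e; rewrite -eqz_mod_dvd; apply/eqP.
by rewrite -[LHS]gez0_abs ?modz_ge0 // -[RHS]gez0_abs ?modz_ge0 // e.
Qed.

End TailWeights.

Section Reclusive.
Variables (R : realType) (d : nat) (A : 'M[R]_d).
Hypothesis hA : reclusive A.

Local Notation intmx v := (map_mx (fun z : int => z%:~R : R) v).

Definition tail_row (w : 'cV[int]_d) (i : 'I_d) (j : nat) : R :=
  \sum_(k < d | (j <= k)%N) A i k * (w k ord0)%:~R.

Lemma tail_row_recl (w : 'cV[int]_d) (i j : 'I_d) :
  tail_row w i j = A i j * (w j ord0)%:~R + tail_row w i j.+1.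
Proof. exact: big_ord_geq_recl. Qed.

Lemma tail_rowB (v v' : 'cV[int]_d) (i : 'I_d) (j : nat) :
  tail_row (v - v') i j = tail_row v i j - tail_row v' i j.
Proof.
by rewrite /tail_row -sumrB; apply: eq_bigr => k _; rewrite !mxE intrB mulrBr.
Qed.

Lemma tail_rowN (w : 'cV[int]_d) (i : 'I_d) (j : nat) :
  tail_row (- w) i j = - tail_row w i j.
Proof.
by rewrite /tail_row -sumrN; apply: eq_bigr => k _; rewrite !mxE intrN mulrN.
Qed.

Lemma tail_row_zero (w : 'cV[int]_d) (i : 'I_d) (j : nat) :
  tail_zero w j -> tail_row w i j = 0.
Proof. by move=> w0; apply: big1 => k jk; rewrite w0 ?mulr0. Qed.

Lemma tail_row0 (w : 'cV[int]_d) (i : 'I_d) : tail_row w i 0 = (A *m intmx w) i ord0.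
Proof. by rewrite mxE; apply: eq_big => // k _; rewrite mxE. Qed.

Lemma tail_row0_diag (w : 'cV[int]_d) (i : 'I_d) :
  tail_row w i 0 = (w i ord0)%:~R + tail_row w i i.+1.
Proof.
have [lower diag _] := hA.
rewrite /tail_row (bigID (fun k : 'I_d => (i <= k)%N)) /= big_ord_geq_recl diag mul1r.
by rewrite [X in _ + X]big1 ?addr0 // => k; rewrite -ltnNge => ki; rewrite lower ?mul0r.
Qed.

Definition row_bounded (w : 'cV[int]_d) : Prop :=
  forall i, `|(A *m intmx w) i ord0| <= 1.

Lemma row_boundedN (w : 'cV[int]_d) : row_bounded w -> row_bounded (- w).
Proof. by move=> bw i; rewrite -tail_row0 tail_rowN normrN tail_row0. Qed.

Lemma closure_tile_row (v : 'cV[int]_d) (x : 'cV[R]_d) (i : 'I_d) :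
  closure (reclusive_tile A v) x ->
  (A *m intmx v) i ord0 <= x i ord0 <= (A *m intmx v) i ord0 + 1.
Proof.
set c := (A *m intmx v) i ord0.
pose slab := [set y : 'cV[R]_d | c <= y i ord0 <= c + 1].
have closed_slab : closed slab.
  have := (continuous_closedP _).1 (@coord_continuous R d 1 i ord0) _ (@itv_closed _ R c (c + 1)).
  by congr closed; apply/seteqP; split => y; rewrite /= in_itv.
suff tile_sub : reclusive_tile A v `<=` slab.
  by move=> /(closureS tile_sub); rewrite -(closure_id _).1.
move=> _ [u [u01 ->]]; rewrite /slab /= mxE -/c.
by have /andP[? ?] := u01 i; apply/andP; split; lra.
Qed.

Lemma adjacent_tiles_row_bounded (v v' : 'cV[int]_d) (p : 'cV[R]_d) :
  closure (reclusive_tile A v) p -> closure (reclusive_tile A v') p ->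
  row_bounded (v - v').
Proof.
move=> pv pv' i; rewrite -tail_row0 tail_rowB !tail_row0.
have /andP[? ?] := closure_tile_row i pv; have /andP[? ?] := closure_tile_row i pv'.
by rewrite ler_norml; apply/andP; split; lra.
Qed.

(* The entries w_k, k >= j, are zero except for +1, -1, +1, ... starting at
   index m.  The partial row sums then stay in (0, A i m], and the tail weight
   lies in one of two ranges according to the parity of the number of nonzero
   entries.  Tails whose first nonzero entry is -1 are alternating tails of -w. *)
Definition alternating_tail (w : 'cV[int]_d) (j : nat) : Prop :=
  exists m : 'I_d, [/\ (j <= m)%N,
    forall i : 'I_d, (i < m)%N -> 0 < tail_row w i j <= A i m &
    (m.+1%:Z <= tail_weight w j <= d%:Z) \/ (m.+1%:Z - d%:Z <= tail_weight w j <= -1)].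

Definition tail_invariant (w : 'cV[int]_d) (j : nat) : Prop :=
  [\/ tail_zero w j, alternating_tail w j | alternating_tail (- w) j].

Lemma alternating_tail_start (w : 'cV[int]_d) (j : 'I_d) :
  tail_zero w j.+1 -> w j ord0 = 1 -> alternating_tail w j.
Proof.
move=> w0 wj; have [_ _ decr] := hA.
exists j; split => // [i ij|].
- rewrite tail_row_recl tail_row_zero // addr0 wj mulr1 lexx andbT.
  by have [] := decr i i j (leqnn i) ij.
- rewrite tail_weight_recl tail_weight_zero // wj; left; have := ltn_ord j; lia.
Qed.

Lemma alternating_tail_skip (w : 'cV[int]_d) (j : 'I_d) :
  alternating_tail w j.+1 -> w j ord0 = 0 -> alternating_tail w j.
Proof.
move=> [m [jm trow tweight]] wj; exists m; split => [|i im|].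
- exact: ltnW.
- by rewrite tail_row_recl wj mulr0 add0r; apply: trow.
- by rewrite tail_weight_recl wj mulr0 add0r.
Qed.

Lemma alternating_tail_flip (w : 'cV[int]_d) (j : 'I_d) :
  alternating_tail w j.+1 -> w j ord0 = -1 -> alternating_tail (- w) j.
Proof.
move=> [m [jm trow tweight]] wj; have [_ _ decr] := hA.
exists j; split => // [i ij|].
- have [/andP[t_gt t_le] [A_lt _]] := (trow i (ltn_trans ij jm), decr i j m (ltnW ij) jm).
  rewrite tail_rowN tail_row_recl wj mulrN1 opprD opprK.
  by apply/andP; split; lra.
- rewrite tail_weightN tail_weight_recl wj; have := ltn_ord j; lia.
Qed.

Lemma alternating_tail_next (w : 'cV[int]_d) (j : 'I_d) :
  row_bounded w -> alternating_tail w j.+1 -> w j ord0 = 0 \/ w j ord0 = -1.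
Proof.
move=> bw [m [jm trow _]]; have [_ diag decr] := hA.
have /andP[t_gt t_le] := trow j jm.
have [A_lt _] := decr j j m (leqnn j) jm; rewrite diag in A_lt.
apply: (@intr_norm_addr_le1_pos R _ (tail_row w j j.+1)); last by apply/andP; split; lra.
by rewrite -tail_row0_diag tail_row0.
Qed.

Lemma tail_invariant_step (w : 'cV[int]_d) (j : 'I_d) :
  row_bounded w -> tail_invariant w j.+1 -> tail_invariant w j.
Proof.
move=> bw [w0|alt|altN].
- have wj_bd : -1 <= w j ord0 <= 1.
    apply: (@intr_norm_addr_le1 R _ (tail_row w j j.+1)).
      by rewrite -tail_row0_diag tail_row0.
    by rewrite tail_row_zero // ltrN10 ltr01.
  have [wj|[wj|wj]] : w j ord0 = 0 \/ w j ord0 = 1 \/ w j ord0 = -1 by lia.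
  + by apply: Or31 => k; rewrite leq_eqVlt => /orP[/eqP/val_inj <- //|]; apply: w0.
  + exact/Or32/alternating_tail_start.
  + by apply/Or33/alternating_tail_start; [apply: tail_zeroN | rewrite mxE wj].
- have [wj|wj] := alternating_tail_next bw alt.
  + exact/Or32/alternating_tail_skip.
  + exact/Or33/alternating_tail_flip.
- have [wj|wj] := alternating_tail_next (row_boundedN bw) altN.
  + exact/Or33/alternating_tail_skip.
  + by apply/Or32; rewrite -[w]opprK; apply: alternating_tail_flip.
Qed.

Lemma tail_invariant0 (w : 'cV[int]_d) : row_bounded w -> tail_invariant w 0.
Proof.
move=> bw; suff inv n : (n <= d)%N -> tail_invariant w (d - n).
  by have := inv d (leqnn d); rewrite subnn.
elim: n => [|n IH] nd.
  by apply: Or31 => k; rewrite subn0 => dk; have := ltn_ord k; lia.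
have jd : (d - n.+1 < d)%N by lia.
apply: (@tail_invariant_step w (Ordinal jd) bw).
by rewrite /= (_ : (d - n.+1).+1 = d - n)%N; [apply: IH; lia | lia].
Qed.

Lemma alternating_tail_weight (w : 'cV[int]_d) (j : nat) :
  alternating_tail w j -> (0 < `|tail_weight w j| <= d)%N.
Proof. by move=> [m [_ _ tweight]]; have := ltn_ord m; lia. Qed.

Lemma row_bounded_weight_ndvd (w : 'cV[int]_d) :
  row_bounded w -> w != 0 -> ~~ (d.+1%:Z %| tail_weight w 0)%Z.
Proof.
move=> bw w_neq0; rewrite dvdzE /=.
have : (0 < `|tail_weight w 0| <= d)%N.
  case: (tail_invariant0 bw) => [w0|alt|altN].
  - by rewrite (tail_zero0 w0) eqxx in w_neq0.
  - exact: alternating_tail_weight.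
  - by rewrite -abszN -tail_weightN; apply: alternating_tail_weight.
by case/andP => pos le_d; rewrite gtnNdvd.
Qed.

Definition tile_index (X : set 'cV[R]_d) : 'cV[int]_d :=
  xget 0 [set v | X = reclusive_tile A v].

Lemma tile_indexP (X : set 'cV[R]_d) :
  reclusive_partition A X -> X = reclusive_tile A (tile_index X).
Proof. by case=> v Xv; apply: (@xgetPex _ 0 [set v | X = reclusive_tile A v]); exists v. Qed.

End Reclusive.

Theorem mainTheorem11 (R : realType) (d : nat) (A : 'M[R]_d) :
  reclusive A ->
  exists c : set 'cV[R]_d -> 'I_d.+1,
    forall X Y : set 'cV[R]_d,
      reclusive_partition A X -> reclusive_partition A Y ->
      X <> Y -> partition_adjacent X Y -> c X <> c Y.
Proof.
move=> hA; exists (fun X => weight_color (tile_index A X)).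
move=> X Y hX hY XY [p [pX pY]] same_color.
have [eX eY] := (tile_indexP hX, tile_indexP hY).
set v := tile_index A X in eX same_color; set v' := tile_index A Y in eY same_color.
rewrite eX in pX; rewrite eY in pY.
have v_neq : v - v' != 0 by rewrite subr_eq0; apply: contraPneq XY => vv'; rewrite eX eY vv'.
have := row_bounded_weight_ndvd hA (adjacent_tiles_row_bounded pX pY) v_neq.
by rewrite tail_weightB weight_color_eq.
Qed.
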